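(* Let $G=(V,E)$ be a finite simple strongly connected directed graph with a fixed total order on $V$. For every $v\in V$, there is exactly one spanning tree $\mathbf a$ of $G$ rooted at $v$ with $\psi(\mathbf a)=V$; that is, $m(V,v)=1$.
   Context: A spanning tree of $G$ is a subgraph on all vertices with no cycle, one vertex (root) of outdegree $0$ and all others of outdegree $1$. Exploration algorithm (depends on the fixed total order of $V$). Input: a spanning tree $\mathbf a$ rooted at $v$. Initialize $A=\{v\}$, $F=\{e: s(e)\neq v\}$, $\mathbf L$ = FIFO list of edges with target $v$, by increasing source. While $\mathbf L$ is nonempty, take its first edge $e$, with source $w$: if $e\in\mathbf a$, add $w$ to $A$, delete from $\mathbf L$ (and $F$) all edges with source $w$, and append to $\mathbf L$ all edges of $F$ with target $w$ by increasing source; otherwise delete from $\mathbf L$ and $F$ all edges with source or target $w$. At the end $\phi(\mathbf a)=A$ and $\psi(\mathbf a)$ is the strongly connected component of $v$ in the induced graph $G_{\phi(\mathbf a)}$. For $W$ strongly connected and $w\in W$, $m(W,w)$ is the number of spanning trees rooted at $w$ with $\psi(\mathbf a)=W$. *)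

From mathcomp Require Import all_boot.
Set Implicit Arguments. Unset Strict Implicit. Unset Printing Implicit Defensive.

Section Exploration.
Variables (V : finType) (e : rel V) (r : rel V).
(* e : edge relation of the directed graph G; an edge is a pair (s,t) with e s t.
   r : the fixed total order on V (as a "less or equal" relation). *)

Definition edges : {set V * V} := [set p | e p.1 p.2].

Definition sort_by_source (s : seq (V * V)) : seq (V * V) :=
  sort (fun f g => r f.1 g.1) s.

Definition spanning_tree (a : {set V * V}) (v : V) : bool :=
  [&& a \subset edges,
      #|[set f in a | f.1 == v]| == 0,
      [forall x, (x != v) ==> (#|[set f in a | f.1 == x]| == 1)] &
      [forall x, forall y, ((x, y) \in a) ==>
         ~~ connect [rel p q | (p, q) \in a] y x]].

Definition state := ({set V} * {set V * V} * seq (V * V))%type.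

Definition init_state (v : V) : state :=
  ([set v], [set f in edges | f.1 != v],
   sort_by_source [seq f <- enum edges | f.2 == v]).

Definition explore_step (a : {set V * V}) (st : state) : state :=
  let: (A, F, L) := st in
  match L with
  | [::] => st
  | f0 :: _ =>
    let w := f0.1 in
    if f0 \in a then
      let F' := [set f in F | f.1 != w] in
      (w |: A, F',
       [seq f <- L | f.1 != w] ++ sort_by_source [seq f <- enum F' | f.2 == w])
    else
      ( A, [set f in F | (f.1 != w) && (f.2 != w)],
        [seq f <- L | (f.1 != w) && (f.2 != w)])
  end.

(* Each step with nonempty list removes at least one edge from F (the
   processed one), so #|V * V|.+1 iterations reach the terminal state
   (empty list), which is a fixpoint of explore_step. *)
Definition explore (a : {set V * V}) (v : V) : state :=
  iter #|{: V * V}|.+1 (explore_step a) (init_state v).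

Definition phi (a : {set V * V}) (v : V) : {set V} := (explore a v).1.1.

Definition scc_in (W : {set V}) (v : V) : {set V} :=
  let eW := [rel x y | [&& e x y, x \in W & y \in W]] in
  [set x in W | connect eW v x && connect eW x v].

Definition psi (a : {set V * V}) (v : V) : {set V} := scc_in (phi a v) v.

(* m(W, w): number of spanning trees rooted at w with psi = W.
   (The root of a spanning tree is determined by the tree.) *)
Definition m_count (W : {set V}) (w : V) : nat :=
  #|[set a : {set V * V} | spanning_tree a w && (psi a w == W)]|.

End Exploration.

(* Run the exploration accepting every edge.  The edges it processes form a
   spanning tree rooted at v, and strong connectivity forces it to explore every
   vertex, so psi = V for that tree.  Conversely, if psi(a) = V then phi(a) = V,
   so the exploration of a never rejects an edge: rejecting an edge with source w
   removes every edge out of w, and w can never be explored afterwards.  Hence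
   the exploration of a coincides with the all-accepting one, a contains all the
   edges that run processes, and a spanning tree containing another one with the
   same root is equal to it.  The order r only decides which tree this is: none
   of its properties is needed. *)

From mathcomp Require Import all_boot zify.
Set Implicit Arguments. Unset Strict Implicit. Unset Printing Implicit Defensive.

Section SpanningTrees.
Variables (V : finType) (e : rel V) (v : V).
Implicit Types (a b T : {set V * V}) (f g : V * V).

Lemma spanning_tree_root_out a f : spanning_tree e a v -> f \in a -> f.1 != v.
Proof.
case/and4P=> _; rewrite cards_eq0 => /eqP/setP root0 _ _ fa; apply/eqP=> fv.
by have := root0 f; rewrite !inE fa fv eqxx.
Qed.

Lemma spanning_tree_out_uniq a f g :
  spanning_tree e a v -> f \in a -> g \in a -> f.1 = g.1 -> f = g.
Proof.
move=> tree_a fa ga fg; have fv := spanning_tree_root_out tree_a fa.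
case/and4P: tree_a => _ _ /forallP/(_ f.1)/implyP/(_ fv)/cards1P[h out_f] _.
have : f \in [set f' in a | f'.1 == f.1] by rewrite inE fa eqxx.
have : g \in [set f' in a | f'.1 == f.1] by rewrite inE ga fg eqxx.
by rewrite out_f !inE => /eqP-> /eqP->.
Qed.

Lemma spanning_tree_out_exists a x :
  spanning_tree e a v -> x != v -> exists2 f, f \in a & f.1 = x.
Proof.
move=> tree_a xv.
case/and4P: tree_a => _ _ /forallP/(_ x)/implyP/(_ xv)/cards1P[f out_x] _.
by have := set11 f; rewrite -out_x inE => /andP[fa /eqP]; exists f.
Qed.

Lemma spanning_tree_subset_eq a b :
  spanning_tree e a v -> spanning_tree e b v -> a \subset b -> a = b.
Proof.
move=> tree_a tree_b /subsetP sub_ab; apply/setP=> f; apply/idP/idP=> [/sub_ab //|fb].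
have [g ga gf] := spanning_tree_out_exists tree_a (spanning_tree_root_out tree_b fb).
by rewrite -(spanning_tree_out_uniq tree_b (sub_ab g ga) fb gf).
Qed.

Lemma ranked_acyclic T (rk : V -> nat) :
  (forall f, f \in T -> rk f.2 < rk f.1) ->
  forall x y, (x, y) \in T -> ~~ connect [rel p q | (p, q) \in T] y x.
Proof.
move=> rk_lt x y xy; apply/negP=> /connectP[p pth last_p].
suff : rk x <= rk y by have := rk_lt _ xy => /=; lia.
rewrite last_p {x xy last_p}; elim: p y pth => //= z p IHp y /andP[yz /IHp].
by move/leq_trans; apply; apply: ltnW (rk_lt (y, z) yz).
Qed.
End SpanningTrees.

Section Exploration.
Variables (V : finType) (e : rel V) (r : rel V) (v : V).
Hypothesis e_irr : irreflexive e.
Hypothesis e_sc : forall x y, connect e x y.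
Implicit Types (a b : {set V * V}) (f g : V * V) (st : state V).

Local Notation explored st := st.1.1 (only parsing).
Local Notation pending st := st.1.2 (only parsing).
Local Notation queue st := st.2 (only parsing).
Local Notation step := (explore_step r).
Local Notation run a n := (iter n (step a) (init_state e r v)).
Local Notation N := #|{: V * V}|.+1.

Lemma mem_sort_by_source s f : (f \in sort_by_source r s) = (f \in s).
Proof. exact: mem_sort. Qed.

Lemma explore_step_ext a b st :
  (forall f, ohead (queue st) = Some f -> (f \in a) = (f \in b)) ->
  step a st = step b st.
Proof. by case: st => [[A F] [|f L]] //= /(_ f erefl) ->. Qed.

Lemma explore_step_cons a A F f0 L :
  step a (A, F, f0 :: L) =
  if f0 \in a then
    (f0.1 |: A, [set f in F | f.1 != f0.1],
     [seq f <- f0 :: L | f.1 != f0.1] ++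
       sort_by_source r [seq f <- enum [set f in F | f.1 != f0.1] | f.2 == f0.1])
  else (A, [set f in F | (f.1 != f0.1) && (f.2 != f0.1)],
        [seq f <- f0 :: L | (f.1 != f0.1) && (f.2 != f0.1)]).
Proof. by []. Qed.

Lemma explored_step a st : explored st \subset explored (step a st).
Proof.
case: st => [[A F] [|f L]] //=; case: ifP => _ //=; exact: subsetUr.
Qed.

Lemma explored_run_mono a m n : m <= n -> explored (run a m) \subset explored (run a n).
Proof.
move/subnK <-; elim: (n - m) => [|k IHk]; first exact: subxx.
exact: subset_trans IHk (explored_step _ _).
Qed.

Definition explore_inv st :=
  [/\ v \in explored st, {subset queue st <= pending st},
      {subset pending st <= edges e},
      forall f, f \in pending st -> f.1 \notin explored st &
      forall f, f \in queue st -> f.2 \in explored st].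

Lemma explore_inv_step a st : explore_inv st -> explore_inv (step a st).
Proof.
case: st => [[A F] [|f0 L]] //; rewrite explore_step_cons; have := mem_head f0 L.
move: (f0 :: L) => L' f0L [vA LF FE FA LA].
case: ifP => _; split=> //=.
- by rewrite in_setU1 vA orbT.
- move=> f; rewrite mem_cat mem_filter mem_sort_by_source mem_filter mem_enum !inE.
  by case/orP=> [/andP[-> /LF ->] | /andP[_ /andP[-> ->]]].
- by move=> f; rewrite inE => /andP[/FE].
- by move=> f; rewrite !inE negb_or => /andP[/FA -> ->].
- move=> f; rewrite mem_cat mem_filter mem_sort_by_source mem_filter inE.
  by case/orP=> [/andP[_ /LA fA] | /andP[/eqP-> _]]; rewrite ?inE ?fA ?eqxx ?orbT.
- by move=> f; rewrite mem_filter !inE => /andP[-> /LF ->].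
- by move=> f; rewrite inE => /andP[/FE].
- by move=> f; rewrite inE => /andP[/FA].
- by move=> f; rewrite mem_filter => /andP[_ /LA].
Qed.

Lemma explore_inv_init : explore_inv (init_state e r v).
Proof.
split=> //= [|f|f|f|f]; rewrite ?mem_sort_by_source ?mem_filter ?mem_enum !inE //.
- case/and3P=> /eqP f2 fE _; rewrite fE; apply: contraTneq fE => f1.
  by rewrite f1 f2 e_irr.
- by case/andP.
- by case/andP.
- by case/andP.
Qed.

Lemma explore_inv_run a n : explore_inv (run a n).
Proof. by elim: n => [|n]; [exact: explore_inv_init | exact: explore_inv_step]. Qed.

Lemma explore_inv_head st f : explore_inv st -> ohead (queue st) = Some f ->
  [/\ f \in edges e, f.1 \notin explored st & f.2 \in explored st].
Proof.
case: st => [[A F] [|f0 L]] //= [_ LF FE FA LA] [<-].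
have f0F := LF f0 (mem_head f0 L).
by rewrite FE // FA // LA ?mem_head.
Qed.

Lemma explored_step_accept a st f :
  ohead (queue st) = Some f -> f \in a -> f.1 \in explored (step a st).
Proof. by case: st => [[A F] [|f0 L]] //= [<-] ->; rewrite setU11. Qed.

Lemma pending_step_lt a st : explore_inv st -> queue st != [::] ->
  #|pending (step a st)| < #|pending st|.
Proof.
case: st => [[A F] [|f0 L]] // [_ LF _ _ _] _; rewrite explore_step_cons.
have f0F : f0 \in F := LF f0 (mem_head f0 L).
apply: proper_card; apply/properP; case: ifP => _ /=; split.
- by apply/subsetP=> f; rewrite inE => /andP[].
- by exists f0; rewrite // inE eqxx andbF.
- by apply/subsetP=> f; rewrite inE => /andP[].
- by exists f0; rewrite // !inE eqxx andbF.
Qed.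

Lemma queue_run_N a : queue (run a N) = [::].
Proof.
have bound n : queue (run a n) = [::] \/ #|pending (run a n)| + n <= #|pending (run a 0)|.
  elim: n => [|n [IHn | IHn]]; first by right; rewrite addn0.
    by left; move: IHn; rewrite iterS; case: (run a n) => [[A F] []].
  case: (eqVneq (queue (run a n)) [::]) => [queue_nil | /(pending_step_lt a (explore_inv_run a n))].
    by left; move: queue_nil; rewrite iterS; case: (run a n) => [[A F] []].
  by rewrite iterS; right; lia.
case: (bound N) => // /leq_trans/(_ (max_card _)).
by rewrite addnS ltnNge leq_addl.
Qed.

Definition excluded w st := w \notin explored st /\ {in pending st, forall g, g.1 != w}.

Lemma excluded_step a w st : explore_inv st -> excluded w st -> excluded w (step a st).
Proof.
case: st => [[A F] [|f0 L]] // [_ LF _ _ _] [wA Fw]; rewrite explore_step_cons.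
have f0w := Fw f0 (LF f0 (mem_head f0 L)).
case: ifP => _; split=> //=; try by move=> g; rewrite inE => /andP[/Fw].
by rewrite in_setU1 negb_or wA andbT eq_sym.
Qed.

Lemma rejected_head_excluded a n f :
  ohead (queue (run a n)) = Some f -> f \notin a ->
  forall m, n < m -> f.1 \notin explored (run a m).
Proof.
move=> head_f fa m /subnK <-.
suff : excluded f.1 (run a ((m - n.+1) + n.+1)) by case.
elim: (m - n.+1) => [|k]; last exact: excluded_step (explore_inv_run a _).
have [_ LF _ FA _] := explore_inv_run a n; rewrite add0n iterS.
case: (run a n) head_f LF FA => [[A F] [|f0 L]] //= [->] LF FA.
rewrite (negbTE fa); split; first by rewrite /= FA ?LF ?mem_head.
by move=> g; rewrite inE => /and3P[].
Qed.

Lemma heads_accepted a : explored (run a N) = setT ->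
  forall n f, ohead (queue (run a n)) = Some f -> f \in a.
Proof.
move=> full n f head_f; apply/negPn/negP=> /(rejected_head_excluded head_f)/(_ (n.+1 + N)).
have /subsetP/(_ f.1) := explored_run_mono a (leq_addl n.+1 N).
by rewrite full in_setT => /(_ isT) -> /(_ (leq_addr _ _)).
Qed.

Lemma run_agree a b n :
  (forall k f, k < n -> ohead (queue (run a k)) = Some f -> (f \in a) = (f \in b)) ->
  run a n = run b n.
Proof.
elim: n => // n IHn same_heads; rewrite !iterS -IHn => [|k f /ltnW]; last exact: same_heads.
by apply: explore_step_ext => f; apply: same_heads.
Qed.

Lemma run_accepting a : explored (run a N) = setT -> forall n, run a n = run setT n.
Proof.
move=> full n; apply: run_agree => k f _ /(heads_accepted full).
by rewrite in_setT => ->.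
Qed.

Definition queue_complete st :=
  (forall f, f \in edges e -> f.2 \in explored st -> f.1 \notin explored st -> f \in queue st) /\
  (forall f, f \in edges e -> f.1 \notin explored st -> f \in pending st).

Lemma queue_complete_step st : queue_complete st -> queue_complete (step setT st).
Proof.
case: st => [[A F] [|f0 L]] //; rewrite explore_step_cons in_setT.
move: (f0 :: L) => L' [inL inF]; split=> f fE /=.
- rewrite !in_setU1 negb_or => f2 /andP[f1w f1A].
  rewrite mem_cat mem_filter mem_sort_by_source mem_filter mem_enum inE f1w inF //=.
  by case/orP: f2 => [-> | /inL ->]; rewrite ?orbT.
- by rewrite in_setU1 negb_or inE => /andP[-> /inF ->].
Qed.

Lemma queue_complete_init : queue_complete (init_state e r v).
Proof.
split=> f fE /=; rewrite !inE.
- by move=> /eqP f2 _; rewrite mem_sort_by_source mem_filter mem_enum f2 eqxx fE.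
- by move: fE; rewrite inE => -> ->.
Qed.

Lemma closed_under_predecessors (A : {set V}) :
  v \in A -> (forall x y, e x y -> y \in A -> x \in A) -> A = setT.
Proof.
move=> vA closedA; apply/setP=> x; rewrite in_setT.
have /connectP[p] := e_sc x v; elim: p x => [|y p IHp] x /=; first by move=> _ <-.
by case/andP=> xy /IHp yA /yA; apply: closedA.
Qed.

Lemma explored_full : explored (run setT N) = setT.
Proof.
have [vA _ _ _ _] := explore_inv_run setT N.
have [complete _] : queue_complete (run setT N).
  elim: N => [|n]; [exact: queue_complete_init | exact: queue_complete_step].
apply: closed_under_predecessors => // x y xy yA; apply/negPn/negP => xA.
by have := complete (x, y); rewrite queue_run_N inE xy => /(_ isT yA xA).
Qed.

Lemma explored_run_heads a n x : x \in explored (run a n) ->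
  x = v \/ exists k f, [/\ k < n, ohead (queue (run a k)) = Some f & f.1 = x].
Proof.
elim: n => [|n IHn]; first by rewrite inE => /eqP; left.
have weaken : (exists k f, [/\ k < n, ohead (queue (run a k)) = Some f & f.1 = x]) ->
    exists k f, [/\ k < n.+1, ohead (queue (run a k)) = Some f & f.1 = x].
  by case=> k [f [lt_kn head_k f1]]; exists k, f; split=> //; apply: ltnW.
rewrite iterS; case run_n: (run a n) IHn => [[A F] [|f0 L]] IHn.
- by move/IHn => [|/weaken]; [left | right].
rewrite explore_step_cons; case: ifP => _ /=; last by move/IHn => [|/weaken]; [left | right].
case/setU1P => [-> | /IHn [|/weaken]]; [| left | right] => //.
by right; exists n, f0; rewrite run_n.
Qed.

Lemma accepted_head_source_later a k j f g :
  ohead (queue (run a k)) = Some f -> f \in a ->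
  ohead (queue (run a j)) = Some g -> k < j -> g.1 != f.1.
Proof.
move=> head_f fa head_g lt_kj.
have [_ g1A _] := explore_inv_head (explore_inv_run a j) head_g.
apply: contraNneq g1A => ->; apply: (subsetP (explored_run_mono a lt_kj)).
by rewrite iterS; apply: explored_step_accept.
Qed.

Definition greedy_tree : {set V * V} :=
  [set f | [exists k : 'I_N, ohead (queue (run setT k)) == Some f]].

Lemma in_greedy_tree f :
  reflect (exists2 k, k < N & ohead (queue (run setT k)) = Some f) (f \in greedy_tree).
Proof.
rewrite inE; apply: (iffP existsP) => [[k /eqP] | [k lt_kN /eqP]]; first by exists k.
by exists (Ordinal lt_kN).
Qed.

Lemma greedy_tree_out_uniq f g :
  f \in greedy_tree -> g \in greedy_tree -> f.1 = g.1 -> f = g.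
Proof.
move=> /in_greedy_tree[k _ head_f] /in_greedy_tree[j _ head_g] fg.
case: (ltngtP k j) => [lt_kj | lt_jk | eq_kj].
- by have := accepted_head_source_later head_f (in_setT f) head_g lt_kj; rewrite fg eqxx.
- by have := accepted_head_source_later head_g (in_setT g) head_f lt_jk; rewrite fg eqxx.
- by move: head_f; rewrite eq_kj head_g => -[].
Qed.

(* Tree edges lead from later-explored to earlier-explored vertices. *)
Definition greedy_rank x := #|[set k : 'I_N | x \notin explored (run setT k)]|.

Lemma greedy_rank_lt f : f \in greedy_tree -> greedy_rank f.2 < greedy_rank f.1.
Proof.
move=> /in_greedy_tree[k lt_kN head_k].
have [_ f1k f2k] := explore_inv_head (explore_inv_run setT k) head_k.
apply: proper_card; apply/properP; split; last by exists (Ordinal lt_kN); rewrite !inE ?f1k ?f2k.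
apply/subsetP=> j; rewrite !inE; case: (leqP k j) => [le_kj | /ltnW le_jk].
  by rewrite (subsetP (explored_run_mono setT le_kj)).
by move=> _; apply: contra f1k; apply: (subsetP (explored_run_mono setT le_jk)).
Qed.

Lemma greedy_tree_spanning : spanning_tree e greedy_tree v.
Proof.
apply/and4P; split.
- apply/subsetP=> f /in_greedy_tree[k _ head_k].
  by have [] := explore_inv_head (explore_inv_run setT k) head_k.
- rewrite cards_eq0; apply/eqP/setP=> f; rewrite in_set in_set0; apply/andP=> -[].
  move=> /in_greedy_tree[k _ head_k] /eqP f1v.
  have [vk _ _ _ _] := explore_inv_run setT k.
  by have [_ + _] := explore_inv_head (explore_inv_run setT k) head_k; rewrite f1v vk.
- apply/forallP=> x; apply/implyP=> xv; apply/cards1P.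
  have : x \in explored (run setT N) by rewrite explored_full in_setT.
  case/explored_run_heads=> [/eqP | [k [f [lt_kN head_k f1x]]]]; first by rewrite (negbTE xv).
  have fG : f \in greedy_tree by apply/in_greedy_tree; exists k.
  exists f; apply/setP=> g; rewrite in_set in_set1; apply/andP/eqP=> [[gG /eqP g1x] | ->].
    by apply: greedy_tree_out_uniq; rewrite ?g1x.
  by rewrite fG f1x eqxx.
- apply/forallP=> x; apply/forallP=> y; apply/implyP.
  move=> xy; apply: (ranked_acyclic _ xy); exact: greedy_rank_lt.
Qed.

Lemma explored_greedy_tree : explored (run greedy_tree N) = setT.
Proof.
rewrite -explored_full; congr (_.1.1); symmetry; apply: run_agree => k f lt_kN head_k.
by rewrite in_setT; symmetry; apply/in_greedy_tree; exists k.
Qed.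

Lemma greedy_tree_unique a :
  spanning_tree e a v -> explored (run a N) = setT -> a = greedy_tree.
Proof.
move=> tree_a full; symmetry; apply: spanning_tree_subset_eq greedy_tree_spanning tree_a _.
apply/subsetP=> f /in_greedy_tree[k _ head_k].
by apply: (heads_accepted full (n := k)); rewrite run_accepting.
Qed.

Lemma psi_setTE a : (psi e r a v == setT) = (explored (run a N) == setT).
Proof.
apply/eqP/eqP=> [psi_a | full].
  apply/setP=> x; rewrite in_setT.
  by have := in_setT x; rewrite -psi_a /psi /scc_in inE => /andP[].
rewrite /psi /phi /explore full; apply/setP=> x; rewrite /scc_in !inE.
by rewrite !(eq_connect (e' := e)) ?e_sc // => y z; rewrite /= !in_setT !andbT.
Qed.
End Exploration.

Theorem lemma3p1 (V : finType) (e : rel V) (r : rel V)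
  (e_irr : irreflexive e)
  (r_total : total r) (r_trans : transitive r) (r_anti : antisymmetric r)
  (e_sc : forall x y : V, connect e x y)
  (v : V) :
  m_count e r [set: V] v = 1.
Proof.
rewrite /m_count (_ : [set a | _] = [set greedy_tree e r v]) ?cards1 //.
apply/setP=> a; rewrite !inE (psi_setTE r v e_sc); apply/andP/eqP=> [[tree_a /eqP full] | ->].
  exact: greedy_tree_unique.
by rewrite greedy_tree_spanning // explored_greedy_tree.
Qed.
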